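(* Let $f(z)=\prod_{j=1}^\infty(1+z/b_j)$, $z\in\mathbb{C}$, where $(b_j)_{j\ge1}$ is an increasing sequence of positive numbers with $\sum_{j\ge1}1/b_j<+\infty$, and assume $f$ has order $\rho\in(0,1)$. Let $F(s)=\ln f(e^s)=\sum_{j\ge1}\ln(1+e^s/b_j)$, $s\in\mathbb{R}$. Then $$\liminf_{s\to+\infty}\frac{|F^{(k)}(s)|}{F''(s)^{k/2}}=0\quad\text{for every integer }k\ge3.$$
   Context: The order of an entire function $f$ is $\limsup_{r\to\infty}\frac{\ln\ln\max_{|z|=r}|f(z)|}{\ln r}$. $F^{(k)}$ denotes the $k$-th derivative. *)

From Stdlib Require Import Reals.
From Coquelicot Require Import Coquelicot.
Open Scope R_scope.

(* Partial products  prod_{j < n} (1 + z / b_j)  (sequence indexed from 0). *)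
Fixpoint prod_part (b : nat -> R) (z : C) (n : nat) : C :=
  match n with
  | O => RtoC 1
  | S m => Cmult (prod_part b z m) (Cplus (RtoC 1) (Cdiv z (RtoC (b m))))
  end.

Definition inf_prod (b : nat -> R) (z : C) : C :=
  (real (Lim_seq (fun n => Re (prod_part b z n))), real (Lim_seq (fun n => Im (prod_part b z n)))).

Definition max_modulus (f : C -> C) (r : R) : R :=
  real (Lub_Rbar (fun y => exists z : C, Cmod z = r /\ y = Cmod (f z))).

Definition limsup_pinfty_eq (g : R -> R) (l : R) : Prop :=
  (forall eps, 0 < eps -> exists R0, forall r, R0 < r -> g r < l + eps) /\
  (forall eps, 0 < eps -> forall R0, exists r, R0 < r /\ l - eps < g r).

Definition liminf_pinfty_eq (g : R -> R) (l : R) : Prop :=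
  (forall eps, 0 < eps -> exists S0, forall s, S0 < s -> l - eps < g s) /\
  (forall eps, 0 < eps -> forall S0, exists s, S0 < s /\ g s < l + eps).

Definition order_eq (f : C -> C) (rho : R) : Prop :=
  limsup_pinfty_eq (fun r => ln (ln (max_modulus f r)) / ln r) rho.

From Stdlib Require Import Reals Lra Lia List Classical.
From Coquelicot Require Import Coquelicot.
Open Scope R_scope.

(* With [softplus t = ln (1 + e^t)] and [a_j = ln b_j], F(s) = Σ_j softplus (s - a_j).
   Every derivative of order k >= 2 of softplus is σ(1 - σ) times a polynomial in the
   logistic function σ = softplus', so |F^(k)| <= C_k F'', and the quotient is at most
   C_k F''^(1 - k/2) <= C_k / sqrt F'' as soon as F'' >= 1.  It therefore suffices that
   F'' is unbounded on every half-line.  If it were bounded on some [S, +oo), then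
   F(s) = O(s^2); since |f(z)| <= 2 exp F(ln |z|), this gives ln M(r) = O((ln r)^2),
   so f would have order 0. *)

(** * Polynomials *)

(* Coefficient lists, constant term first. *)
Fixpoint peval (p : list R) (x : R) : R :=
  match p with nil => 0 | c :: p' => c + x * peval p' x end.

Fixpoint padd (p q : list R) : list R :=
  match p, q with
  | nil, _ => q
  | _, nil => p
  | c :: p', d :: q' => (c + d) :: padd p' q'
  end.

Definition pscale (c : R) (p : list R) : list R := map (Rmult c) p.

Fixpoint pderiv (p : list R) : list R :=
  match p with nil => nil | _ :: p' => padd p' (0 :: pderiv p') end.

Fixpoint pnorm1 (p : list R) : R :=
  match p with nil => 0 | c :: p' => Rabs c + pnorm1 p' end.

Lemma peval_padd p q x : peval (padd p q) x = peval p x + peval q x.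
Proof.
  revert q; induction p as [|c p IH]; intros [|d q]; simpl; try rewrite IH; ring.
Qed.

Lemma peval_pscale c p x : peval (pscale c p) x = c * peval p x.
Proof. induction p as [|d p IH]; simpl; [|rewrite IH]; ring. Qed.

Lemma is_derive_peval p x : is_derive (peval p) x (peval (pderiv p) x).
Proof.
  induction p as [|c p IH]; simpl.
  - apply (is_derive_const 0).
  - rewrite peval_padd; simpl.
    replace (peval p x + (0 + x * peval (pderiv p) x))
      with (0 + (1 * peval p x + x * peval (pderiv p) x)) by ring.
    apply (is_derive_plus (fun _ => c) (fun y => y * peval p y)).
    + apply (is_derive_const c).
    + apply (is_derive_mult (fun y => y) (peval p)); auto.
      * apply (is_derive_id (K := R_AbsRing)).
      * intros; apply Rmult_comm.
Qed.

Lemma pnorm1_ge0 p : 0 <= pnorm1 p.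
Proof. induction p as [|c p IH]; simpl; [|pose proof (Rabs_pos c)]; lra. Qed.

Lemma Rabs_peval_le p x : 0 <= x <= 1 -> Rabs (peval p x) <= pnorm1 p.
Proof.
  intros Hx; induction p as [|c p IH]; simpl.
  - rewrite Rabs_R0; lra.
  - eapply Rle_trans; [apply Rabs_triang|].
    rewrite Rabs_mult, (Rabs_pos_eq x) by lra.
    pose proof (Rabs_pos (peval p x)); nra.
Qed.

Definition pmulX1mX (p : list R) : list R :=
  padd (0 :: p) (pscale (-1) (0 :: 0 :: p)).

Lemma peval_pmulX1mX p x : peval (pmulX1mX p) x = x * (1 - x) * peval p x.
Proof. unfold pmulX1mX; rewrite peval_padd, peval_pscale; simpl; ring. Qed.

Lemma exp_le_compat x y : x <= y -> exp x <= exp y.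
Proof.
  intros [Hlt|Heq]; [left; apply exp_increasing, Hlt|right; rewrite Heq; reflexivity].
Qed.

Lemma ln_nonpos x : x <= 0 -> ln x = 0.
Proof. intros Hx; unfold ln; destruct (Rlt_dec 0 x); [exfalso; lra|reflexivity]. Qed.

Lemma ln_le_of_le_exp x y : 0 <= y -> x <= exp y -> ln x <= y.
Proof.
  intros Hy Hx; destruct (Rle_lt_dec x 0) as [Hx0|Hx0].
  - rewrite ln_nonpos; assumption.
  - rewrite <- (ln_exp y); apply ln_le; assumption.
Qed.

Lemma ln_lt_of_lt_exp x y : 0 < y -> x < exp y -> ln x < y.
Proof.
  intros Hy Hx; destruct (Rle_lt_dec x 0) as [Hx0|Hx0].
  - rewrite ln_nonpos; assumption.
  - rewrite <- (ln_exp y); apply ln_increasing; assumption.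
Qed.

Lemma exp_dominates_quadratic A d :
  0 < d -> exists S, forall s, S <= s -> A * s ^ 2 < exp (d * s).
Proof.
  intros Hd.
  assert (Hd3 : 0 < d ^ 3) by (apply pow_lt, Hd).
  exists (1 + 6 * Rabs A / d ^ 3); intros s Hs.
  assert (HA : 0 <= 6 * Rabs A / d ^ 3)
    by (apply Rdiv_le_0_compat; [pose proof (Rabs_pos A)|]; lra).
  assert (Hcube : (d * s) ^ 3 / 6 <= exp (d * s)).
  { pose proof (exp_ge_taylor (d * s) 3 ltac:(nra)) as Htaylor.
    simpl in Htaylor; nra. }
  assert (H6 : 6 * Rabs A < s * d ^ 3) by (apply (Rlt_div_l _ _ _ Hd3); lra).
  assert (Hs2 : 0 < s ^ 2) by (apply pow_lt; lra).
  assert (6 * Rabs A * s ^ 2 < s * d ^ 3 * s ^ 2) by (apply Rmult_lt_compat_r; lra).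
  assert (A * s ^ 2 <= Rabs A * s ^ 2) by (apply Rmult_le_compat_r; [lra|apply Rle_abs]).
  replace ((d * s) ^ 3 / 6) with (s * d ^ 3 * s ^ 2 / 6) in Hcube by field.
  lra.
Qed.

Lemma sum_f_R0_le_Series (c : nat -> R) n :
  (forall j, 0 <= c j) -> ex_series c -> sum_f_R0 c n <= Series c.
Proof.
  intros Hc Hex; apply sum_incr; [|exact Hc].
  apply is_series_Reals, Series_correct, Hex.
Qed.

Lemma Rabs_Lim_seq_le (u : nat -> R) B :
  (forall n, Rabs (u n) <= B) -> Rabs (real (Lim_seq u)) <= B.
Proof.
  intros Hu.
  assert (Hup : Rbar_le (Lim_seq u) (Lim_seq (fun _ => B))).
  { apply Lim_seq_le_loc; exists 0%nat; intros n _.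
    pose proof (Hu n) as H; apply Rabs_le_between in H; lra. }
  assert (Hlow : Rbar_le (Lim_seq (fun _ => - B)) (Lim_seq u)).
  { apply Lim_seq_le_loc; exists 0%nat; intros n _.
    pose proof (Hu n) as H; apply Rabs_le_between in H; lra. }
  rewrite Lim_seq_const in Hup, Hlow.
  destruct (Lim_seq u) as [l| |]; simpl in *; try contradiction.
  apply Rabs_le_between; lra.
Qed.

Lemma le_of_is_derive_le (f f' : R -> R) c x y :
  x <= y -> (forall t, is_derive f t (f' t)) -> (forall t, x <= t <= y -> f' t <= c) ->
  f y <= f x + c * (y - x).
Proof.
  intros Hxy Hf Hc.
  destruct (MVT_gen f x y f') as [t [Ht Hmvt]].
  - intros t _; apply Hf.
  - intros t _; apply continuity_pt_filterlim.
    apply (ex_derive_continuous (K := R_AbsRing) (V := R_NormedModule)).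
    eexists; apply Hf.
  - rewrite Rmin_left, Rmax_right in Ht by lra.
    pose proof (Hc t Ht); nra.
Qed.

Lemma quadratic_growth (f f' f'' : R -> R) S T :
  0 <= S -> (forall t, is_derive f t (f' t)) -> (forall t, is_derive f' t (f'' t)) ->
  (forall t, S <= t -> f'' t <= T) ->
  exists A, 0 <= A /\ forall s, S <= s -> 1 <= s -> f s <= A * s ^ 2.
Proof.
  intros S0 Hf Hf' HT.
  exists (Rabs (f S) + Rabs (f' S) + Rabs T); split.
  { pose proof (Rabs_pos (f S)); pose proof (Rabs_pos (f' S)); pose proof (Rabs_pos T); lra. }
  intros s HSs Hs1.
  assert (Hslope : forall t, S <= t <= s -> f' t <= Rabs (f' S) + Rabs T * s).
  { intros t Ht.
    pose proof (le_of_is_derive_le f' f'' T S t (proj1 Ht) Hf' (fun u Hu => HT u (proj1 Hu))).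
    pose proof (Rle_abs (f' S)); pose proof (Rle_abs T); pose proof (Rabs_pos T); nra. }
  pose proof (le_of_is_derive_le f f' _ S s HSs Hf Hslope) as Hgrowth.
  pose proof (Rle_abs (f S)); pose proof (Rabs_pos (f S));
    pose proof (Rabs_pos (f' S)); pose proof (Rabs_pos T).
  assert (0 <= Rabs (f' S) + Rabs T * s) by nra.
  assert ((Rabs (f' S) + Rabs T * s) * (s - S) <= (Rabs (f' S) + Rabs T * s) * s) by nra.
  assert (Hs2 : 1 <= s <= s ^ 2) by (simpl; nra).
  assert (Rabs (f' S) * s <= Rabs (f' S) * s ^ 2) by (apply Rmult_le_compat_l; lra).
  assert (Rabs (f S) <= Rabs (f S) * s ^ 2) by nra.
  lra.
Qed.

(** * Derivatives of the softplus function *)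

Definition softplus (t : R) : R := ln (1 + exp t).

Definition logistic (t : R) : R := exp t / (1 + exp t).

Lemma logistic_bounds t : 0 < logistic t < 1.
Proof.
  unfold logistic; pose proof (exp_pos t); split.
  - apply Rdiv_lt_0_compat; lra.
  - apply (Rdiv_lt_1 (exp t) (1 + exp t)); lra.
Qed.

Lemma logistic_le_exp t : logistic t <= exp t.
Proof.
  unfold logistic; pose proof (exp_pos t).
  apply (Rle_div_l (exp t)); nra.
Qed.

Lemma softplus_bounds t : 0 < softplus t <= exp t.
Proof.
  unfold softplus; pose proof (exp_pos t); split.
  - rewrite <- ln_1; apply ln_increasing; lra.
  - rewrite <- (ln_exp (exp t)) at 2; apply ln_le; [lra|apply exp_ineq1_le].
Qed.

Lemma is_derive_softplus t : is_derive softplus t (logistic t).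
Proof.
  unfold softplus, logistic; pose proof (exp_pos t).
  auto_derive; [lra|field; lra].
Qed.

Lemma is_derive_logistic t : is_derive logistic t (logistic t * (1 - logistic t)).
Proof.
  unfold logistic; pose proof (exp_pos t).
  auto_derive; [lra|field; lra].
Qed.

(* The chain rule with [logistic' = logistic (1 - logistic)] maps [peval p (logistic t)]
   to [peval (pmulX1mX (pderiv p)) (logistic t)]. *)
Fixpoint logistic_poly (m : nat) : list R :=
  match m with
  | O => 0 :: 1 :: nil
  | S m => pmulX1mX (pderiv (logistic_poly m))
  end.

Definition softplus_deriv (m : nat) (t : R) : R :=
  match m with
  | O => softplus t
  | S m => peval (logistic_poly m) (logistic t)
  end.

Lemma is_derive_softplus_deriv m t :
  is_derive (softplus_deriv m) t (softplus_deriv (S m) t).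
Proof.
  destruct m as [|m]; cbn -[pmulX1mX].
  - replace (0 + logistic t * (1 + logistic t * 0)) with (logistic t) by ring.
    apply is_derive_softplus.
  - rewrite peval_pmulX1mX.
    apply (is_derive_comp (peval (logistic_poly m)) logistic).
    + apply is_derive_peval.
    + apply is_derive_logistic.
Qed.

Lemma softplus_deriv_2 t : softplus_deriv 2 t = logistic t * (1 - logistic t).
Proof. cbn -[pmulX1mX]; rewrite peval_pmulX1mX; simpl; ring. Qed.

Lemma softplus_deriv_le_deriv_2 m :
  exists C, 0 <= C /\
    forall t, Rabs (softplus_deriv (S (S m)) t) <= C * softplus_deriv 2 t.
Proof.
  exists (pnorm1 (pderiv (logistic_poly m))); split; [apply pnorm1_ge0|intros t].
  rewrite softplus_deriv_2; cbn -[pmulX1mX]; rewrite peval_pmulX1mX.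
  pose proof (logistic_bounds t).
  rewrite Rabs_mult, (Rabs_pos_eq (_ * _)) by nra.
  rewrite Rmult_comm; apply Rmult_le_compat_r; [nra|].
  apply Rabs_peval_le; lra.
Qed.

Lemma softplus_deriv_le_exp m :
  exists K, 0 <= K /\ forall t, Rabs (softplus_deriv m t) <= K * exp t.
Proof.
  destruct m as [|[|m]].
  - exists 1; split; [lra|intros t; simpl].
    pose proof (softplus_bounds t); rewrite Rabs_pos_eq; lra.
  - exists 1; split; [lra|intros t; simpl].
    pose proof (logistic_bounds t); pose proof (logistic_le_exp t).
    replace (0 + logistic t * (1 + logistic t * 0)) with (logistic t) by ring.
    rewrite Rabs_pos_eq; lra.
  - destruct (softplus_deriv_le_deriv_2 m) as [C [HC Hb]].
    exists C; split; [exact HC|intros t].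
    eapply Rle_trans; [apply Hb|]; apply Rmult_le_compat_l; [exact HC|].
    rewrite softplus_deriv_2.
    pose proof (logistic_bounds t); pose proof (logistic_le_exp t); nra.
Qed.

(** * Shifted sums *)

Section ShiftedSum.

Variable a : nat -> R.
Hypothesis summable_exp_neg : ex_series (fun j => exp (- a j)).

Definition shifted_sum (m : nat) (s : R) : R :=
  Series (fun j => softplus_deriv m (s - a j)).

Lemma softplus_deriv_shift_le m K s c j :
  (forall t, Rabs (softplus_deriv m t) <= K * exp t) -> 0 <= K -> s <= c ->
  Rabs (softplus_deriv m (s - a j)) <= K * exp c * exp (- a j).
Proof.
  intros HK K0 Hsc; eapply Rle_trans; [apply HK|].
  rewrite Rmult_assoc, <- exp_plus; apply Rmult_le_compat_l; [exact K0|].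
  apply exp_le_compat; lra.
Qed.

Lemma ex_series_Rabs_shifted m s :
  ex_series (fun j => Rabs (softplus_deriv m (s - a j))).
Proof.
  destruct (softplus_deriv_le_exp m) as [K [K0 HK]].
  apply (ex_series_le (fun j => Rabs (softplus_deriv m (s - a j)))
                      (fun j => K * exp s * exp (- a j))).
  - intros j; change (norm ?x) with (Rabs x); rewrite Rabs_Rabsolu.
    apply (softplus_deriv_shift_le m K); auto; lra.
  - apply (ex_series_scal_l (K * exp s) (fun j => exp (- a j))), summable_exp_neg.
Qed.

Lemma is_series_shifted m s :
  is_series (fun j => softplus_deriv m (s - a j)) (shifted_sum m s).
Proof. apply Series_correct, ex_series_Rabs, ex_series_Rabs_shifted. Qed.

(* Weierstrass M-test on the ball of radius |x| + 1 around 0, then termwise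
   differentiation of the uniformly convergent series of derivatives. *)
Lemma is_derive_shifted_sum m x :
  is_derive (shifted_sum m) x (shifted_sum (S m) x).
Proof.
  set (fn := fun n y => softplus_deriv m (y - a n)).
  set (fn' := fun n y => softplus_deriv (S m) (y - a n)).
  assert (Hfn' : forall n y, is_derive (fn n) y (fn' n y)).
  { intros n y; unfold fn, fn'.
    rewrite <- (Rmult_1_l (softplus_deriv (S m) (y - a n))).
    apply (is_derive_comp (softplus_deriv m) (fun y => y - a n)).
    - apply is_derive_softplus_deriv.
    - auto_derive; [exact I|ring]. }
  set (r := mkposreal _ (Rle_lt_0_plus_1 _ (Rabs_pos x))).
  destruct (softplus_deriv_le_exp (S m)) as [K [K0 HK]].
  assert (Hnormal : CVN_r fn' r).
  { set (An := fun j => K * exp r * exp (- a j)).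
    assert (HAn : ex_series An)
      by apply (ex_series_scal_l (K * exp r) (fun j => exp (- a j))), summable_exp_neg.
    exists An, (Series An); split.
    - apply is_series_Reals.
      apply (is_series_ext An); [|apply Series_correct, HAn].
      intros j; unfold An; rewrite Rabs_pos_eq; [reflexivity|].
      pose proof (exp_pos r); pose proof (exp_pos (- a j)).
      apply Rmult_le_pos; [apply Rmult_le_pos|]; lra.
    - intros n y Hy; unfold Boule in Hy; simpl in Hy.
      apply (softplus_deriv_shift_le (S m) K); auto.
      rewrite Rminus_0_r in Hy; pose proof (Rle_abs y); simpl; lra. }
  destruct (CVN_CVU_r fn' r Hnormal x ltac:(simpl; lra)) as [e Hunif].
  apply is_derive_Reals.
  apply (CVU_derivable (SP fn) (SP fn') (shifted_sum m) (shifted_sum (S m)) x e Hunif).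
  - intros y _; apply is_series_Reals, is_series_shifted.
  - intros n y _; apply is_derive_Reals; unfold SP.
    apply (is_derive_ext (fun y => sum_n (fun k => fn k y) n)).
    { intros z; apply sum_n_Reals. }
    rewrite <- sum_n_Reals.
    apply (is_derive_sum_n (V := R_NormedModule) fn); intros k _; apply Hfn'.
  - unfold Boule; rewrite Rminus_diag, Rabs_R0; apply cond_pos.
Qed.

Lemma shifted_sum_le_shifted_sum_2 m :
  exists C, 0 <= C /\
    forall s, Rabs (shifted_sum (S (S m)) s) <= C * shifted_sum 2 s.
Proof.
  destruct (softplus_deriv_le_deriv_2 m) as [C [C0 HC]].
  exists C; split; [exact C0|intros s].
  unfold shifted_sum; rewrite <- Series_scal_l.
  eapply Rle_trans; [apply Series_Rabs, ex_series_Rabs_shifted|].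
  apply Series_le.
  - intros j; split; [apply Rabs_pos|apply HC].
  - apply (ex_series_scal_l C (fun j => softplus_deriv 2 (s - a j))).
    apply ex_series_Rabs, ex_series_Rabs_shifted.
Qed.

End ShiftedSum.

(** * Maximum modulus and order *)

Lemma max_modulus_le (f : C -> C) r B :
  0 <= B -> (forall z, Cmod z = r -> Cmod (f z) <= B) -> max_modulus f r <= B.
Proof.
  intros B0 Hf; unfold max_modulus.
  destruct (Lub_Rbar_correct (fun y => exists z : C, Cmod z = r /\ y = Cmod (f z)))
    as [_ Hleast].
  assert (Hle : Rbar_le (Lub_Rbar (fun y => exists z : C, Cmod z = r /\ y = Cmod (f z))) B).
  { apply Hleast; intros y [z [Hz ->]]; apply Hf, Hz. }
  destruct (Lub_Rbar _); simpl in *; try contradiction; lra.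
Qed.

Lemma order_nonpos_of_log_max_modulus_quadratic (f : C -> C) rho A S :
  (forall r, S <= r -> ln (max_modulus f r) <= A * ln r ^ 2) ->
  order_eq f rho -> rho <= 0.
Proof.
  intros Hgrowth [_ Hfrequently]; apply Rnot_lt_le; intros Hrho.
  set (d := rho / 2); assert (Hd : 0 < d) by (unfold d; lra).
  destruct (exp_dominates_quadratic A d Hd) as [S1 HS1].
  destruct (Hfrequently d Hd (Rmax S (exp (Rmax S1 1)))) as [r [Hr Hratio]].
  cbv beta in Hratio; replace (rho - d) with d in Hratio by (unfold d; field).
  assert (Hs : Rmax S1 1 < ln r).
  { rewrite <- (ln_exp (Rmax S1 1)).
    apply ln_increasing; [apply exp_pos|].
    eapply Rle_lt_trans; [apply Rmax_r|exact Hr]. }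
  pose proof (Rmax_l S1 1); pose proof (Rmax_r S1 1).
  assert (Hlnr : 0 < ln r) by lra.
  apply (Rlt_div_r _ _ _ Hlnr) in Hratio.
  assert (Hlnln : ln (ln (max_modulus f r)) < d * ln r).
  { apply ln_lt_of_lt_exp; [nra|].
    eapply Rle_lt_trans; [apply Hgrowth|apply HS1; lra].
    eapply Rle_trans; [apply Rmax_l|left; exact Hr]. }
  lra.
Qed.

Section ProductBound.

Variable b : nat -> R.
Hypothesis hb_pos : forall j, 0 < b j.
Hypothesis hb_sum : ex_series (fun j => / b j).

Lemma summable_exp_neg_ln : ex_series (fun j => exp (- ln (b j))).
Proof.
  apply (ex_series_ext (fun j => / b j)); [|exact hb_sum].
  intros j; rewrite exp_Ropp, exp_ln; [reflexivity|apply hb_pos].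
Qed.

Lemma softplus_sub_ln s j : softplus (s - ln (b j)) = ln (1 + exp s / b j).
Proof.
  unfold softplus, Rminus, Rdiv; rewrite exp_plus, exp_Ropp, exp_ln by apply hb_pos.
  reflexivity.
Qed.

Lemma Cmod_prod_part_le z n :
  Cmod (prod_part b z (S n)) <= exp (sum_f_R0 (fun j => ln (1 + Cmod z / b j)) n).
Proof.
  assert (Hfactor : forall j,
            Cmod (RtoC 1 + z / RtoC (b j))%C <= exp (ln (1 + Cmod z / b j))).
  { intros j; pose proof (hb_pos j).
    assert (0 <= Cmod z / b j) by (apply Rdiv_le_0_compat; [apply Cmod_ge_0|lra]).
    rewrite exp_ln by lra.
    eapply Rle_trans; [apply Cmod_triangle|].
    rewrite Cmod_1, Cmod_div, Cmod_R, Rabs_pos_eq by (lra || (intro E; injection E; lra)).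
    lra. }
  induction n as [|n IH]; simpl prod_part; simpl sum_f_R0.
  - rewrite Cmod_mult, Cmod_1, Rmult_1_l; apply Hfactor.
  - rewrite Cmod_mult, exp_plus.
    apply Rmult_le_compat; [apply Cmod_ge_0|apply Cmod_ge_0|exact IH|apply Hfactor].
Qed.

Lemma max_modulus_inf_prod_le s :
  max_modulus (inf_prod b) (exp s)
  <= 2 * exp (shifted_sum (fun j => ln (b j)) 0 s).
Proof.
  set (c := fun j => softplus_deriv 0 (s - ln (b j))).
  assert (Hc : forall j, 0 <= c j) by (intros j; apply Rlt_le, softplus_bounds).
  assert (Hex : ex_series c)
    by apply ex_series_Rabs, (ex_series_Rabs_shifted _ summable_exp_neg_ln).
  assert (Hpart : forall z n, Cmod z = exp s ->
                    Cmod (prod_part b z n) <= exp (shifted_sum (fun j => ln (b j)) 0 s)).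
  { intros z [|n] Hz; simpl prod_part.
    - rewrite Cmod_1, <- exp_0; apply exp_le_compat.
      eapply Rle_trans; [apply (Hc 0%nat)|].
      apply (sum_f_R0_le_Series c 0); auto.
    - eapply Rle_trans; [apply (Cmod_prod_part_le z n)|].
      apply exp_le_compat; rewrite Hz.
      rewrite (sum_eq _ c) by (intros j _; symmetry; apply softplus_sub_ln).
      apply sum_f_R0_le_Series; auto. }
  (* [inf_prod] is a componentwise limit; [2] absorbs the [sqrt 2] of [Cmod_2Rmax]. *)
  apply max_modulus_le; [pose proof (exp_pos (shifted_sum (fun j => ln (b j)) 0 s)); lra|].
  intros z Hz.
  assert (Hsqrt2 : sqrt 2 <= 2).
  { rewrite <- (sqrt_square 2) at 2 by lra; apply sqrt_le_1_alt; lra. }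
  assert (Hcomp : forall proj : C -> R, (forall w, Rabs (proj w) <= Cmod w) ->
            Rabs (real (Lim_seq (fun n => proj (prod_part b z n))))
            <= exp (shifted_sum (fun j => ln (b j)) 0 s)).
  { intros proj Hproj; apply Rabs_Lim_seq_le; intros n.
    eapply Rle_trans; [apply Hproj|apply Hpart, Hz]. }
  eapply Rle_trans; [apply Cmod_2Rmax|]; unfold inf_prod; simpl.
  pose proof (exp_pos (shifted_sum (fun j => ln (b j)) 0 s)).
  apply Rmult_le_compat; [apply sqrt_pos|apply Rmax_Rle; left; apply Rabs_pos|lra|].
  apply Rmax_lub; apply Hcomp; intros w;
    eapply Rle_trans, Rmax_Cmod; [apply Rmax_l|apply Rmax_r].
Qed.

End ProductBound.

Section Order.

Variables (b : nat -> R) (rho : R).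
Hypothesis hb_pos : forall j, 0 < b j.
Hypothesis hb_sum : ex_series (fun j => / b j).
Hypothesis hrho_pos : 0 < rho.
Hypothesis horder : order_eq (inf_prod b) rho.

Lemma shifted_sum_2_unbounded T S0 :
  exists s, S0 < s /\ T < shifted_sum (fun j => ln (b j)) 2 s.
Proof.
  set (G := shifted_sum (fun j => ln (b j))).
  apply NNPP; intros Hnone.
  set (S1 := Rmax S0 0 + 1).
  assert (HS1 : 0 <= S1) by (unfold S1; pose proof (Rmax_r S0 0); lra).
  assert (HT : forall t, S1 <= t -> G 2%nat t <= T).
  { intros t Ht; apply Rnot_lt_le; intros HTt; apply Hnone; exists t; split; [|exact HTt].
    unfold S1 in Ht; pose proof (Rmax_l S0 0); lra. }
  destruct (quadratic_growth (G 0%nat) (G 1%nat) (G 2%nat) S1 T HS1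
              (is_derive_shifted_sum _ (summable_exp_neg_ln b hb_pos hb_sum) 0%nat)
              (is_derive_shifted_sum _ (summable_exp_neg_ln b hb_pos hb_sum) 1%nat) HT)
    as [A [HA HG0]].
  apply (Rlt_not_le _ _ hrho_pos).
  apply (order_nonpos_of_log_max_modulus_quadratic (inf_prod b) rho (A + 1) (exp S1));
    [|exact horder].
  intros r Hr.
  assert (Hr0 : 0 < r) by (pose proof (exp_pos S1); lra).
  assert (Hs : S1 <= ln r) by (rewrite <- (ln_exp S1); apply ln_le; [apply exp_pos|exact Hr]).
  assert (Hs1 : 1 <= ln r) by (unfold S1 in Hs; pose proof (Rmax_r S0 0); lra).
  pose proof (HG0 (ln r) Hs Hs1) as HG0s.
  apply Rle_trans with (1 + A * ln r ^ 2); [|simpl; nra].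
  apply ln_le_of_le_exp; [nra|].
  rewrite <- (exp_ln r) at 1 by exact Hr0.
  eapply Rle_trans; [apply max_modulus_inf_prod_le; assumption|].
  rewrite exp_plus; apply Rmult_le_compat; [lra|apply Rlt_le, exp_pos| |].
  - pose proof (exp_ineq1_le 1); lra.
  - apply exp_le_compat; exact HG0s.
Qed.

End Order.

Lemma Derive_n_series_log (b : nat -> R) k s :
  (forall j, 0 < b j) -> ex_series (fun j => / b j) ->
  Derive_n (fun s => Series (fun j => ln (1 + exp s / b j))) k s
  = shifted_sum (fun j => ln (b j)) k s.
Proof.
  intros hb_pos hb_sum; revert s; induction k as [|k IH]; intros s; simpl.
  - apply Series_ext; intros j; symmetry; apply softplus_sub_ln, hb_pos.
  - rewrite (Derive_ext _ _ s IH).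
    apply is_derive_unique, is_derive_shifted_sum, summable_exp_neg_ln; assumption.
Qed.

Lemma div_Rpower_half_lt C x eps k :
  0 <= C -> 0 < eps -> (3 <= k)%nat -> 1 + (C / eps) ^ 2 < x ->
  C * x / Rpower x (INR k / 2) < eps.
Proof.
  intros HC Heps Hk Hx.
  assert (Hce : 0 <= C / eps) by (apply Rdiv_le_0_compat; lra).
  assert (Hx1 : 1 < x) by (pose proof (pow2_ge_0 (C / eps)); lra).
  assert (Hsqrt : C / eps < sqrt x).
  { rewrite <- (sqrt_pow2 (C / eps)) by exact Hce.
    apply sqrt_lt_1_alt; split; [apply pow2_ge_0|lra]. }
  assert (Hsqrt0 : 0 < sqrt x) by (apply sqrt_lt_R0; lra).
  assert (Hpow : x * sqrt x <= Rpower x (INR k / 2)).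
  { rewrite <- Rpower_sqrt, <- (Rpower_1 x) at 1 by lra.
    rewrite <- Rpower_plus; apply Rle_Rpower; [lra|].
    apply le_INR in Hk; simpl in Hk; lra. }
  apply Rle_lt_trans with (C / sqrt x).
  - replace (C / sqrt x) with (C * x / (x * sqrt x)) by (field; lra).
    apply Rmult_le_compat_l; [nra|].
    apply Rinv_le_contravar; [nra|exact Hpow].
  - apply (Rlt_div_l _ _ _ Hsqrt0).
    apply (Rlt_div_l _ _ _ Heps) in Hsqrt; lra.
Qed.

Theorem proposition4p7 (b : nat -> R) (rho : R)
  (hb_pos : forall j, 0 < b j)
  (hb_incr : forall i j, (i <= j)%nat -> b i <= b j)
  (hb_sum : ex_series (fun j => / b j))
  (hrho : 0 < rho < 1)
  (horder : order_eq (inf_prod b) rho) :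
  let F := fun s : R => Series (fun j => ln (1 + exp s / b j)) in
  forall k : nat, (3 <= k)%nat ->
    liminf_pinfty_eq
      (fun s => Rabs (Derive_n F k s) / Rpower (Derive_n F 2 s) (INR k / 2)) 0.
Proof.
  intros F k Hk.
  set (G := shifted_sum (fun j => ln (b j))).
  assert (HF : forall m s, Derive_n F m s = G m s)
    by (intros; apply Derive_n_series_log; assumption).
  split.
  - intros eps Heps; exists 0; intros s _.
    assert (0 <= Rabs (Derive_n F k s) / Rpower (Derive_n F 2 s) (INR k / 2)).
    { apply Rdiv_le_0_compat; [apply Rabs_pos|apply exp_pos]. }
    lra.
  - intros eps Heps S0.
    destruct k as [|[|m]]; [lia|lia|].
    destruct (shifted_sum_le_shifted_sum_2 _ (summable_exp_neg_ln b hb_pos hb_sum) m)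
      as [C [HC0 HC]].
    destruct (shifted_sum_2_unbounded b rho hb_pos hb_sum (proj1 hrho) horder
                (1 + (C / eps) ^ 2) S0) as [s [Hs HGs]].
    exists s; split; [exact Hs|]; rewrite !HF, Rplus_0_l.
    apply Rle_lt_trans with (C * G 2%nat s / Rpower (G 2%nat s) (INR (S (S m)) / 2)).
    + apply Rmult_le_compat_r; [apply Rlt_le, Rinv_0_lt_compat, exp_pos|apply HC].
    + apply div_Rpower_half_lt; assumption.
Qed.
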